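(* For every $y_0\in Y$, $\Gamma_{per}(y_0)\subset W_1(y_0)$ and $V_{per}(y_0)\ge k^*(y_0)$.
   Context: Let $Y\subset\mathbb{R}^m$ be nonempty compact, $U_0$ a compact metric space, $U(\cdot):Y\rightsquigarrow U_0$ upper semicontinuous and compact-valued, and $f:\mathbb{R}^m\times U_0\to\mathbb{R}^m$, $k:\mathbb{R}^m\times U_0\to\mathbb{R}$ continuous. Put $A(y):=\{u\in U(y): f(y,u)\in Y\}$ and $G:=\{(y,u):y\in Y,\ u\in A(y)\}$. Standing assumption: $A(y)\ne\emptyset$ for all $y$. An admissible process from $z\in Y$ on a time range is a pair $(y(t),u(t))$ with $y(0)=z$, $u(t)\in A(y(t))$ and $y(t+1)=f(y(t),u(t))$. Let $\mathcal U_{\bar t}(y_0)$ denote the admissible controls from $y_0$ on $\{0,\dots,\bar t-1\}$. Periodic processes: - For an integer $\mathcal T>0$, a $\mathcal T$-periodic admissible process $(y_{\mathcal T}(\cdot),u_{\mathcal T}(\cdot))$ is an admissible process on $\{0,1,\dots\}$ (from $y_{\mathcal T}(0)$) satisfying $(y_{\mathcal T}(t+\mathcal T),u_{\mathcal T}(t+\mathcal T))=(y_{\mathcal T}(t),u_{\mathcal T}(t))$ for all $t$. - Such a process is finite-time reachable from $y_0$ if there exist an integer $\bar t\ge0$ and a control $u\in\mathcal U_{\bar t}(y_0)$ whose trajectory satisfies $y(\bar t)=y_{\mathcal T}(0)$. - $\Gamma_{per}(y_0)$ is the set of Borel probability measures $\gamma$ on $G$ of the form $\gamma(Q)=\frac1{\mathcal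 T}\sum_{t=0}^{\mathcal T-1}1_Q(y_{\mathcal T}(t),u_{\mathcal T}(t))$ generated by such finite-time-reachable periodic processes. - $V_{per}(y_0):=\inf\frac1{\mathcal T}\sum_{t=0}^{\mathcal T-1}k(y_{\mathcal T}(t),u_{\mathcal T}(t))$, where the infimum is over all $\mathcal T$ and all such processes. Measure spaces and LP objects: - $\mathcal P(G)$ denotes the Borel probability measures on $G$ and $\mathcal M_+(G)$ the finite nonnegative Borel measures on $G$. - $W:=\{\gamma\in\mathcal P(G):\int_G(\varphi(f(y,u))-\varphi(y))\,d\gamma=0\ \forall\varphi\in C(Y)\}$. - $W_1(y_0)$ is the set of $\gamma\in W$ for which there exists $\xi\in\mathcal M_+(G)$ with $\int_G(\varphi(y)-\varphi(y_0))\,d\gamma=\int_G(\varphi(f(y,u))-\varphi(y))\,d\xi$ for all $\varphi\in C(Y)$. - $k^*(y_0):=\inf_{\gamma\in W_1(y_0)}\int_Gk\,d\gamma$. Equivalently, $k^*(y_0)$ is the infimum of $\int_G k\,d\gamma$ over pairs $(\gamma,\xi)\in\mathcal P(G)\times\mathcal M_+(G)$ with $\gamma\in W$ and $\int_G(\varphi(y_0)-\varphi(y))\,d\gamma+\int_G(\varphi(f(y,u))-\varphi(y))\,d\xi=0$ for all $\varphi\in C(Y)$. *)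

From HB Require Import structures.
From mathcomp Require Import all_boot all_order all_algebra.
From mathcomp Require Import all_classical all_reals all_analysis.
Set Implicit Arguments. Unset Strict Implicit. Unset Printing Implicit Defensive.
Import Order.TTheory GRing.Theory Num.Theory.
Import numFieldNormedType.Exports.
Local Open Scope classical_set_scope.
Local Open Scope ring_scope.

Section LP.
(* R^m is 'rV[R]_m; U0 a (pointed) pseudometric space, assumed compact and
   Hausdorff (hence a compact metric space) in the theorem. *)
Variables (R : realType) (m : nat) (U0 : pseudoPMetricType R).

Definition ambient := ('rV[R]_m * U0)%type.
Definition borel_ambient := g_sigma_algebraType (@open ambient).

Definition usc_on (Y : set 'rV[R]_m) (U : 'rV[R]_m -> set U0) : Prop :=
  forall y, Y y -> forall V : set U0, open V -> U y `<=` V ->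
    exists2 N : set 'rV[R]_m, nbhs y N &
      forall y', N y' -> Y y' -> U y' `<=` V.

Variables (Y : set 'rV[R]_m) (U : 'rV[R]_m -> set U0)
  (f : ambient -> 'rV[R]_m) (k : ambient -> R).

Definition Aset (y : 'rV[R]_m) : set U0 := [set u | U y u /\ Y (f (y, u))].

Definition Gset : set ambient := [set p | Y p.1 /\ Aset p.1 p.2].

Definition admissible_on (y0 : 'rV[R]_m) (tb : nat)
    (yy : nat -> 'rV[R]_m) (uu : nat -> U0) : Prop :=
  yy 0%N = y0 /\
  forall t, (t < tb)%N -> Aset (yy t) (uu t) /\ yy t.+1 = f (yy t, uu t).

Definition periodic_process (T : nat) (yy : nat -> 'rV[R]_m) (uu : nat -> U0)
  : Prop :=
  (0 < T)%N /\
  (forall t, Aset (yy t) (uu t) /\ yy t.+1 = f (yy t, uu t)) /\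
  (forall t, yy (t + T)%N = yy t /\ uu (t + T)%N = uu t).

Definition ft_reachable (y0 : 'rV[R]_m) (yT : nat -> 'rV[R]_m) : Prop :=
  exists tb (yy : nat -> 'rV[R]_m) (uu : nat -> U0),
    admissible_on y0 tb yy uu /\ yy tb = yT 0%N.

Definition Gamma_per (y0 : 'rV[R]_m) : set {measure set borel_ambient -> \bar R} :=
  [set gam : {measure set borel_ambient -> \bar R} | exists T yy uu, periodic_process T yy uu /\ ft_reachable y0 yy /\
     forall Q : set borel_ambient, measurable Q ->
       gam Q = ((T%:R)^-1 * \sum_(t < T) \1_Q ((yy t, uu t) : borel_ambient))%:E].

Definition V_per (y0 : 'rV[R]_m) : \bar R :=
  ereal_inf [set x : \bar R | exists T yy uu, periodic_process T yy uu /\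
     ft_reachable y0 yy /\
     x = ((T%:R)^-1 * \sum_(t < T) k (yy t, uu t))%:E].

(* P(G): Borel probability measures on G, represented as Borel probability
   measures on R^m x U0 concentrated on the (closed) set G. *)
Definition Wset : set {measure set borel_ambient -> \bar R} :=
  [set gam : {measure set borel_ambient -> \bar R} | gam [set: borel_ambient] = 1%E /\ gam (~` (Gset : set borel_ambient)) = 0%E /\
     forall phi : 'rV[R]_m -> R, {within Y, continuous phi} ->
       (\int[gam]_(p in (Gset : set borel_ambient)) (phi (f p) - phi p.1)%:E
          = 0)%E].

Definition W1set (y0 : 'rV[R]_m) : set {measure set borel_ambient -> \bar R} :=
  [set gam : {measure set borel_ambient -> \bar R} | Wset gam /\
     exists xi : {measure set borel_ambient -> \bar R},
       (xi [set: borel_ambient] < +oo)%E /\ xi (~` (Gset : set borel_ambient)) = 0%E /\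
       forall phi : 'rV[R]_m -> R, {within Y, continuous phi} ->
         (\int[gam]_(p in (Gset : set borel_ambient)) (phi p.1 - phi y0)%:E
          = \int[xi]_(p in (Gset : set borel_ambient)) (phi (f p) - phi p.1)%:E)%E].

Definition kstar (y0 : 'rV[R]_m) : \bar R :=
  ereal_inf [set (\int[gam]_(p in (Gset : set borel_ambient)) (k p)%:E)%E
             | gam in W1set y0].
End LP.

From HB Require Import structures.
From mathcomp Require Import all_boot all_order all_algebra.
From mathcomp Require Import all_classical all_reals all_analysis.
From mathcomp Require Import measurable_realfun lra zify.
Set Implicit Arguments. Unset Strict Implicit. Unset Printing Implicit Defensive.
Import Order.TTheory GRing.Theory Num.Theory.
Import numFieldNormedType.Exports.
Local Open Scope classical_set_scope.
Local Open Scope ring_scope.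

(* The occupational measure [gamma] of a [T]-periodic process lies in [W]
   because [phi (y (t + 1)) - phi (y t)] telescopes around the cycle.  If the
   cycle is reached from [y0] along a path of length [tb], then
   [xi = sum_(s < tb) delta_(path s) + sum_(j < T) (T - 1 - j) / T delta_(y j, u j)]
   witnesses [gamma \in W_1 y0]: the path part telescopes to
   [phi (y 0) - phi y0], and summation by parts turns the cycle part into the
   mean of [phi (y j) - phi (y 0)].  The average cost of the process is
   [int k dgamma], whence [k* y0 <= V_per y0].  The test functions [phi] are
   only continuous on [Y], so all integrals are taken against finite Dirac
   sums, whose supports have only Borel subsets. *)

Section ConcentratedMeasure.
Context d (T : measurableType d) (R : realType).
Variables (mu : {measure set T -> \bar R}) (S : set T).
Hypotheses (measurable_subS : forall A, A `<=` S -> measurable A)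
  (mu_setC0 : mu (~` S) = 0%E).
Local Open Scope ereal_scope.
Import HBNNSimple.

Let mS : measurable S. Proof. exact: measurable_subS. Qed.

(* No measurability of [g] is needed: every simple function below [g] can be
   cut down to [S] without changing its integral. *)
Lemma ge0_integral_patch (g : T -> \bar R) : (forall x, 0 <= g x) ->
  \int[mu]_x g x = \int[mu]_x (g \_ S) x.
Proof.
move=> g0; have gS0 x : 0 <= (g \_ S) x by apply: erestrict_ge0 => y _.
rewrite !ge0_integralTE //; apply/eqP; rewrite eq_le; apply/andP; split.
- apply: ge_ereal_sup => _ [h hg <-].
  rewrite -integralT_nnsfun (ge0_negligible_integral _ _ _ _ mu_setC0) //;
    last 3 first.
  + exact: measurableC.
  + by apply/measurable_EFinP; apply: measurable_funTS.
  + by move=> x _; rewrite lee_fin.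
  rewrite setTD setCK integral_nnsfun // mrestrict.
  apply: ereal_sup_ubound; exists (proj_nnsfun h mS) => // x.
  by rewrite -mrestrict /patch; case: ifPn => // _; exact: hg.
- apply: ge_ereal_sup => _ [h hg <-].
  apply: ereal_sup_ubound; exists h => // x.
  by apply: le_trans (hg x) _; rewrite /patch; case: ifPn.
Qed.

Lemma integral_setI_support (D : set T) (g : T -> \bar R) :
  \int[mu]_(x in D) g x = \int[mu]_(x in D `&` S) g x.
Proof.
have ge0_int h : (forall x, 0 <= h x) ->
    \int[mu]_(x in D) h x = \int[mu]_(x in D `&` S) h x.
  move=> h0; rewrite integral_mkcond ge0_integral_patch; last exact: erestrict_ge0.
  by rewrite -integral_mkcond -integral_mkcondl setIC.
by rewrite integralE [RHS]integralE !ge0_int.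
Qed.

End ConcentratedMeasure.

Section DiracWsum.
Context d (T : measurableType d) (R : realType).

Definition dirac_wsum (n : nat) (w : nat -> {nonneg R}) (p : nat -> T) :
    {measure set T -> \bar R} :=
  msum (fun i => mscale (w i) (\d_(p i))) n.

Variables (n : nat) (w : nat -> {nonneg R}) (p : nat -> T).

Lemma dirac_wsumE A : dirac_wsum n w p A = (\sum_(i < n) (w i)%:num * \1_A (p i))%:E.
Proof. by rewrite /dirac_wsum /msum /mscale /= -sumEFin. Qed.

Lemma dirac_wsum_lty : (dirac_wsum n w p setT < +oo)%E.
Proof. by rewrite dirac_wsumE ltry. Qed.

Lemma dirac_wsum_setC0 (A : set T) : (forall i, (i < n)%N -> A (p i)) ->
  dirac_wsum n w p (~` A) = 0%E.
Proof.
move=> pA; rewrite dirac_wsumE big1 // => i _.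
by rewrite indicE in_setC mem_set ?mulr0 //; exact: pA.
Qed.

Hypothesis measurable_set1 : forall x : T, measurable [set x].

Let support := p @` [set i | (i < n)%N].

Let measurable_subsupport A : A `<=` support -> measurable A.
Proof.
move=> As; apply: countable_measurable => //; apply: finite_set_countable.
by apply: sub_finite_set As _; apply: finite_image; exact: finite_II.
Qed.

Lemma integral_dirac_wsum (D : set T) (g : T -> R) :
  (forall i, (i < n)%N -> D (p i)) ->
  (\int[dirac_wsum n w p]_(x in D) (g x)%:E = (\sum_(i < n) (w i)%:num * g (p i))%:E)%E.
Proof.
move=> pD.
rewrite (integral_setI_support measurable_subsupport); last first.
  by apply: dirac_wsum_setC0 => i ni; exists i.
have mDS : measurable (D `&` support) by apply: measurable_subsupport => x [].
have mh (h : T -> \bar R) : measurable_fun (D `&` support) h.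
  by move=> _ B _; apply: measurable_subsupport => x [[]].
have ge0_int h : (forall x, 0 <= h x)%E ->
    (\int[dirac_wsum n w p]_(x in D `&` support) h x
     = \sum_(i < n) (w i)%:num%:E * h (p i))%E.
  move=> h0; rewrite ge0_integral_measure_sum //; apply: eq_bigr => i _.
  rewrite ge0_integral_mscale // integral_dirac // diracE mem_set ?mul1e //.
  by split; [exact: pD | exists i => /=].
rewrite integralE !ge0_int //.
under eq_bigr do rewrite funeposE -EFin_max -EFinM.
under [X in (_ - X)%E]eq_bigr do rewrite funenegE -EFin_max -EFinM.
rewrite !sumEFin -EFinB -sumrB; congr EFin; apply: eq_bigr => i _.
rewrite -mulrBr; congr (_ * _).
by case: (leP (g (p i)) 0) => ?; case: (leP (- g (p i)) 0) => ?; lra.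
Qed.

End DiracWsum.

Lemma telescope_sumr_ord (V : zmodType) (c : nat -> V) n :
  \sum_(i < n) (c i.+1 - c i) = c n - c 0%N.
Proof. by rewrite -(big_mkord xpredT (fun i => c i.+1 - c i)) telescope_sumr. Qed.

Lemma sumr_countdown_increments (V : zmodType) (c : nat -> V) n :
  \sum_(j < n) (c j.+1 - c j) *+ (n.-1 - j) = \sum_(j < n) (c j - c 0%N).
Proof.
elim: n => [|n IHn]; first by rewrite !big_ord0.
rewrite big_ord_recr /= subnn mulr0n addr0 [RHS]big_ord_recr /= -IHn.
rewrite -telescope_sumr_ord -big_split /=; apply: eq_bigr => j _.
by rewrite -mulrSr; congr (_ *+ _); have := ltn_ord j; lia.
Qed.

Section ClosedGraph.
Variables (R : realType) (m : nat) (U0 : pseudoPMetricType R).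

Lemma closed_ambient1 (p : ambient m U0) : hausdorff_space U0 -> closed [set p].
Proof.
move=> hU; have -> : [set p] = fst @^-1` [set p.1] `&` snd @^-1` [set p.2].
  by apply/seteqP; split=> [q -> //|[q1 q2] /= [-> ->]]; case: p.
apply: closedI; apply: (continuous_closedP _).1.
- by move=> x; exact: cvg_fst.
- exact/accessible_closed_set1/hausdorff_accessible/norm_hausdorff.
- by move=> x; exact: cvg_snd.
- exact/accessible_closed_set1/hausdorff_accessible.
Qed.

Lemma closed_borel_ambient_measurable (A : set (ambient m U0)) :
  closed A -> measurable (A : set (borel_ambient m U0)).
Proof.
move=> cA; rewrite -[A]setCK; apply: measurableC.
by apply: sub_sigma_algebra; exact: closed_openC.
Qed.

Variables (Y : set 'rV[R]_m) (U : 'rV[R]_m -> set U0).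

Lemma usc_graph_closed : closed Y -> usc_on Y U ->
    (forall y, Y y -> closed (U y)) ->
  closed [set p : ambient m U0 | Y p.1 /\ U p.1 p.2].
Proof.
move=> cY usc cU; rewrite -[X in closed X]setCK; apply: open_closedC.
rewrite openE => -[y u] /= ngr.
have [Yy|nYy] := pselect (Y y); last first.
  exists (~` Y, setT) => [|[a b] /= [nYa _] [Ya _] //].
  by split; [apply: open_nbhs_nbhs; split=> //; exact: closed_openC | exact: filterT].
have nUyu : ~ U y u by move=> Uyu; apply: ngr.
have [P [Q [oP oQ Pu UQ PQ0]]] :=
  (regular_openP u).1 (@uniform_regular _ u) (U y) (cU y Yy) nUyu.
have [N Ny NQ] := usc y Yy Q oQ UQ.
exists (N, P) => [|[a b] /= [Na Pb] [Ya Uab]].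
  by split=> //; exact: open_nbhs_nbhs.
have : (P `&` Q) b by split=> //; exact: NQ a Na Ya b Uab.
by rewrite PQ0.
Qed.

Variable f : ambient m U0 -> 'rV[R]_m.

Lemma Gset_closed : hausdorff_space U0 -> compact Y -> usc_on Y U ->
    (forall y, Y y -> compact (U y)) -> continuous f ->
  closed (Gset Y U f).
Proof.
move=> hU cptY usc cptU cf.
have cY := compact_closed (@norm_hausdorff _ _) cptY.
have -> : Gset Y U f = [set p | Y p.1 /\ U p.1 p.2] `&` f @^-1` Y.
  by apply/seteqP; split=> -[y u] /= [] => [? [? ?] | [? ?] ?].
apply: closedI; last exact: (continuous_closedP f).1.
by apply: usc_graph_closed => // y Yy; exact: compact_closed (cptU y Yy).
Qed.

End ClosedGraph.

Section PeriodicOccupation.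
Variables (R : realType) (m : nat) (U0 : pseudoPMetricType R).
Variables (Y : set 'rV[R]_m) (U : 'rV[R]_m -> set U0)
  (f : ambient m U0 -> 'rV[R]_m).
Hypotheses (measurable_ambient1 : forall p : borel_ambient m U0, measurable [set p])
  (measurable_G : measurable (Gset Y U f : set (borel_ambient m U0))).

Local Notation G := (Gset Y U f : set (borel_ambient m U0)).

Lemma periodic_process_G T yy uu : periodic_process Y U f T yy uu ->
  forall t, G (yy t, uu t).
Proof.
move=> [T0 [step per]] t; split; last exact: (step t).1.
case: t => [|t] /=; last by rewrite (step t).2; exact: (step t).1.2.
rewrite -(per 0%N).1 add0n; case: T T0 {per} => // T _.
by rewrite (step T).2; exact: (step T).1.2.
Qed.

Lemma admissible_on_G y0 tb yy uu : Y y0 -> admissible_on Y U f y0 tb yy uu ->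
  forall i, (i < tb)%N -> G (yy i, uu i).
Proof.
move=> Yy0 [start step] i itb; split; last exact: (step i itb).1.
case: i itb => [|i] itb /=; first by rewrite start.
by rewrite (step i (ltnW itb)).2; exact: (step i (ltnW itb)).1.2.
Qed.

Definition occupation_measure T (yy : nat -> 'rV[R]_m) (uu : nat -> U0) :=
  dirac_wsum T (fun=> (T%:R^-1 : R)%:nng) (fun t => (yy t, uu t) : borel_ambient m U0).

Lemma occupation_measureE T yy uu A : occupation_measure T yy uu A =
  (T%:R^-1 * \sum_(t < T) \1_A ((yy t, uu t) : borel_ambient m U0))%:E.
Proof. by rewrite dirac_wsumE mulr_sumr. Qed.

Lemma integral_occupation_measure T yy uu (h : ambient m U0 -> R) :
  periodic_process Y U f T yy uu ->
  (\int[occupation_measure T yy uu]_(p in G) (h p)%:E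
   = (T%:R^-1 * \sum_(t < T) h (yy t, uu t))%:E)%E.
Proof.
move=> per; rewrite integral_dirac_wsum ?mulr_sumr //.
by move=> t _; exact: periodic_process_G per t.
Qed.

Lemma occupation_measure_W T yy uu : periodic_process Y U f T yy uu ->
  Wset Y U f (occupation_measure T yy uu).
Proof.
move=> per; have [T0 [step cycle]] := per.
have TN0 : T%:R != 0 :> R by rewrite pnatr_eq0 -lt0n.
split; [|split].
- by rewrite occupation_measureE indicT sumr_const card_ord mulVf.
- by apply: dirac_wsum_setC0 => t _; exact: periodic_process_G per t.
- move=> phi _; rewrite integral_occupation_measure //.
  under eq_bigr => t _ do rewrite -(step t).2.
  by rewrite (telescope_sumr_ord (phi \o yy)) /= -(cycle 0%N).1 add0n subrr mulr0.
Qed.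

(* [(T - 1 - j) / T] is the mean time spent at phase [j] of the cycle before
   reaching a uniformly chosen phase. *)
Definition transient_measure T tb (yy y' : nat -> 'rV[R]_m) (uu u' : nat -> U0) :=
  dirac_wsum (tb + T)
    (fun i => if (i < tb)%N then 1%:nng else ((T.-1 - (i - tb))%:R / T%:R : R)%:nng)
    (fun i => (if (i < tb)%N then (y' i, u' i) else (yy (i - tb), uu (i - tb)))%N
       : borel_ambient m U0).

Let transient_point_G y0 T tb yy uu y' u' :
  Y y0 -> periodic_process Y U f T yy uu -> admissible_on Y U f y0 tb y' u' ->
  forall i, G (if (i < tb)%N then (y' i, u' i) else (yy (i - tb)%N, uu (i - tb)%N)).
Proof.
move=> Yy0 per adm i; case: ifP => itb; first exact: admissible_on_G adm i itb.
exact: periodic_process_G per _.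
Qed.

Lemma integral_transient_measure y0 T tb yy uu y' u' (h : ambient m U0 -> R) :
  Y y0 -> periodic_process Y U f T yy uu -> admissible_on Y U f y0 tb y' u' ->
  (\int[transient_measure T tb yy y' uu u']_(p in G) (h p)%:E
   = (\sum_(i < tb) h (y' i, u' i)
      + T%:R^-1 * \sum_(j < T) h (yy j, uu j) *+ (T.-1 - j))%:E)%E.
Proof.
move=> Yy0 per adm; rewrite integral_dirac_wsum //; last first.
  by move=> i _; exact: (transient_point_G Yy0 per adm).
rewrite big_split_ord /= mulr_sumr; congr (_ + _)%:E; apply: eq_bigr => i _.
  by rewrite ltn_ord mul1r.
by rewrite ltnNge leq_addr addKn /= -[h _ *+ _]mulr_natl mulrA (mulrC T%:R^-1).
Qed.

Lemma occupation_measure_W1 y0 T yy uu : Y y0 ->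
    periodic_process Y U f T yy uu -> ft_reachable Y U f y0 yy ->
  W1set Y U f y0 (occupation_measure T yy uu).
Proof.
move=> Yy0 per [tb [y' [u' [adm reach]]]].
have [T0 [step _]] := per.
have TN0 : T%:R != 0 :> R by rewrite pnatr_eq0 -lt0n.
split; first exact: occupation_measure_W.
exists (transient_measure T tb yy y' uu u'); split; first exact: dirac_wsum_lty.
split; first by apply: dirac_wsum_setC0 => i _; exact: (transient_point_G Yy0 per adm).
move=> phi _; rewrite integral_occupation_measure //.
rewrite (integral_transient_measure _ Yy0 per adm); congr EFin.
under [X in _ = X + _]eq_bigr => i _ do rewrite /= -(adm.2 i (ltn_ord i)).2.
under [X in _ = _ + _ * X]eq_bigr => j _ do rewrite /= -(step j).2.
rewrite (telescope_sumr_ord (phi \o y')) (sumr_countdown_increments (phi \o yy)) /=.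
rewrite reach adm.1 !sumrB !sumr_const !card_ord !mulrBr.
rewrite -[phi y0 *+ T]mulr_natr -[phi (yy 0%N) *+ T]mulr_natr.
rewrite !(mulrCA T%:R^-1) mulVf // !mulr1.
by rewrite [RHS]addrC addrA subrK.
Qed.

Lemma W1set_eq_measure y0 (gam gam' : {measure set borel_ambient m U0 -> \bar R}) :
  (forall A, measurable A -> gam A = gam' A) ->
  W1set Y U f y0 gam' -> W1set Y U f y0 gam.
Proof.
move=> gamE [[gam1 [gamG0 gamW]] [xi [xi_fin [xiG0 xiW]]]].
have eq_int h : (\int[gam]_(p in G) h p = \int[gam']_(p in G) h p)%E.
  by apply: eq_measure_integral => A mA _; exact: gamE.
split; last by exists xi; do 2!split=> //; move=> phi cphi; rewrite eq_int; exact: xiW.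
split; first by rewrite gamE.
split; first by rewrite gamE //; exact: measurableC.
by move=> phi cphi; rewrite eq_int; exact: gamW.
Qed.

Lemma Gamma_per_sub_W1set y0 : Y y0 -> Gamma_per Y U f y0 `<=` W1set Y U f y0.
Proof.
move=> Yy0 gam [T [yy [uu [per [reach gamE]]]]].
apply: (W1set_eq_measure (gam' := occupation_measure T yy uu)).
  by move=> A mA; rewrite gamE // occupation_measureE.
exact: occupation_measure_W1.
Qed.

Lemma kstar_le_V_per y0 (k : ambient m U0 -> R) : Y y0 ->
  (kstar Y U f k y0 <= V_per Y U f k y0)%E.
Proof.
move=> Yy0; apply: le_ereal_inf_tmp => _ [T [yy [uu [per [reach ->]]]]].
apply: ereal_inf_lbound; exists (occupation_measure T yy uu).
  exact: occupation_measure_W1.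
exact: integral_occupation_measure.
Qed.

End PeriodicOccupation.

Theorem proposition2p4 (R : realType) (m : nat) (U0 : pseudoPMetricType R)
  (Y : set 'rV[R]_m) (U : 'rV[R]_m -> set U0)
  (f : ambient m U0 -> 'rV[R]_m) (k : ambient m U0 -> R) :
  compact Y -> Y !=set0 ->
  compact [set: U0] -> hausdorff_space U0 ->
  usc_on Y U -> (forall y, Y y -> compact (U y)) ->
  continuous f -> continuous k ->
  (forall y, Y y -> Aset Y U f y !=set0) ->
  forall y0, Y y0 ->
    Gamma_per Y U f y0 `<=` W1set Y U f y0 /\
    (kstar Y U f k y0 <= V_per Y U f k y0)%E.
Proof.
move=> cptY _ _ hU usc cptU cf _ _ y0 Yy0.
have measurable_ambient1 (p : borel_ambient m U0) : measurable [set p].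
  by apply: closed_borel_ambient_measurable; exact: closed_ambient1.
have measurable_G : measurable (Gset Y U f : set (borel_ambient m U0)).
  by apply: closed_borel_ambient_measurable; exact: Gset_closed.
by split; [apply: Gamma_per_sub_W1set | apply: kstar_le_V_per].
Qed.
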